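(* Let $f:\mathbb{R}^{n\times n}\to\mathbb{R}$ be differentiable and suppose there are constants $\underline{\nu}_f\le\overline{\nu}_f$ such that \[ \frac{\underline{\nu}_f}{2}\|Y-X\|_{\mathsf F}^2\le f(Y)-f(X)-\langle\nabla f(X),Y-X\rangle\le\frac{\overline{\nu}_f}{2}\|Y-X\|_{\mathsf F}^2\quad\text{for all }X,Y\in\mathcal{D}_n . \] Let $0<p<1$, $\epsilon\ge 0$, $\overline{\nu}_h=p(1-p)(1+\epsilon)^{p-2}$, and \[ \sigma>\sigma^*_{p,\epsilon}:=\max\Big\{\frac{\overline{\nu}_f}{\overline{\nu}_h},0\Big\}. \] If $X_{\sigma,p,\epsilon}$ is a global minimizer of \[ \min_{X\in\mathcal{D}_n}\ F_{\sigma,p,\epsilon}(X):=f(X)+\sigma\sum_{i,j=1}^n (X_{ij}+\epsilon)^p , \] then $X_{\sigma,p,\epsilon}$ is also a global minimizer of $\min_{X\in\Pi_n} f(X)$.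
   Context: $\Pi_n$ is the set of $n\times n$ permutation matrices and $\mathcal{D}_n=\{X\in\mathbb{R}^{n\times n}: X\mathbf{e}=X^{\mathsf T}\mathbf{e}=\mathbf{e},\ X\ge0\}$ the set of doubly stochastic matrices ($\mathbf{e}$ the all-ones vector). $\langle M,N\rangle=\mathrm{tr}(M^{\mathsf T}N)$ and $\|\cdot\|_{\mathsf F}$ is the Frobenius norm. *)

From mathcomp Require Import all_boot all_order all_algebra all_fingroup.
From mathcomp Require Import all_classical all_reals all_analysis.
Set Implicit Arguments. Unset Strict Implicit. Unset Printing Implicit Defensive.
Import Order.TTheory GRing.Theory Num.Theory.
Local Open Scope ring_scope.

Definition frob_inner (R : numDomainType) (n : nat) (M N : 'M[R]_n) : R :=
  \tr (M^T *m N).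

Definition frob_norm2 (R : numDomainType) (n : nat) (M : 'M[R]_n) : R :=
  frob_inner M M.

Definition doubly_stochastic (R : numDomainType) (n : nat) (X : 'M[R]_n) : Prop :=
  (forall i j, 0 <= X i j) /\
  (forall i, \sum_j X i j = 1) /\
  (forall j, \sum_i X i j = 1).

Definition perm_matrix (R : numDomainType) (n : nat) (X : 'M[R]_n) : Prop :=
  is_perm_mx X.

Definition F_pen (R : realType) (n : nat) (f : 'M[R]_n -> R) (sigma p eps : R)
  (X : 'M[R]_n) : R :=
  f X + sigma * \sum_i \sum_j powR (X i j + eps) p.

(* The penalty [h X = \sum_(i,j) (X_ij + eps)^p] is strongly concave on doubly
   stochastic matrices: on ]0, 1 + eps] the map [z |-> z^p] has second
   derivative at most [- nu_h], so
   [h (X + D) + h (X - D) - 2 h X <= - nu_h ||D||^2].  With the upper curvature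
   bound on [f] this gives
   [F (X + D) + F (X - D) - 2 F X <= (nu_f - sigma nu_h) ||D||^2 < 0] for [D <> 0],
   so a minimizer of [F] on D_n is not the midpoint of a nondegenerate segment
   of D_n.  A doubly stochastic matrix that is not a permutation matrix is such
   a midpoint: every row and column meeting its fractional support S meets it
   at least twice, so #S >= #rows(S) + #cols(S), and a dimension count yields a
   nonzero D supported on S with zero row and column sums.  Hence the minimizer
   is a permutation matrix, and as [h] is constant on permutation matrices it
   minimizes [f] among them. *)

From mathcomp Require Import all_boot all_order all_algebra all_fingroup.
From mathcomp Require Import all_classical all_reals all_analysis.
From mathcomp Require Import ring lra.
Set Implicit Arguments. Unset Strict Implicit. Unset Printing Implicit Defensive.
Import Order.TTheory GRing.Theory Num.Theory numFieldNormedType.Exports.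
Local Open Scope ring_scope.

Section Frobenius.
Variables (R : numDomainType) (n : nat).
Implicit Types M N : 'M[R]_n.

Lemma frob_norm2E M : frob_norm2 M = \sum_i \sum_j M i j ^+ 2.
Proof.
rewrite /frob_norm2 /frob_inner /mxtrace exchange_big; apply: eq_bigr => j _.
by rewrite mxE; apply: eq_bigr => i _; rewrite !mxE.
Qed.

Lemma frob_innerN M N : frob_inner M (- N) = - frob_inner M N.
Proof. by rewrite /frob_inner mulmxN raddfN. Qed.

Lemma frob_norm2N M : frob_norm2 (- M) = frob_norm2 M.
Proof.
by rewrite !frob_norm2E; under eq_bigr do under eq_bigr do rewrite mxE sqrrN.
Qed.

End Frobenius.

Lemma frob_norm2_gt0 (R : realDomainType) n (M : 'M[R]_n) :
  M != 0 -> 0 < frob_norm2 M.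
Proof.
move=> /matrix0Pn[i [j Mij]].
have row_ge0 k : 0 <= \sum_l M k l ^+ 2 by apply: sumr_ge0 => l _; apply: sqr_ge0.
rewrite frob_norm2E lt_def sumr_ge0 ?andbT //; apply: contraNN Mij => /eqP sum0.
have row0 := psumr_eq0P (fun k _ => row_ge0 k) sum0 (i := i) isT.
by rewrite -sqrf_eq0 (psumr_eq0P (fun l _ => sqr_ge0 (M i l)) row0 (i := j) isT).
Qed.

Lemma leq_double_card_imset (T U : finType) (f : T -> U) (S : {set T}) :
  (forall x, x \in S -> exists2 y, y \in S & (y != x) && (f y == f x)) ->
  (2 * #|f @: S| <= #|S|)%N.
Proof.
move=> paired; rewrite -[#|S|]sum1_card (partition_big f (mem (f @: S))) /=.
  2: by move=> x xS; apply: imset_f.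
rewrite mulnC -sum_nat_const; apply: leq_sum => _ /imsetP[x xS ->].
have [y yS /andP[yx fyx]] := paired x xS.
rewrite sum1_card; apply: (@leq_trans #|[set x; y]|).
  by rewrite cards2 eq_sym yx.
apply/subset_leq_card/fintype.subsetP => z.
by rewrite !inE => /orP[] /eqP ->; rewrite unfold_in /= ?xS ?yS ?eqxx.
Qed.

Lemma exists_nonzero_left_kernel (F : fieldType) m n (B : 'M[F]_(m, n)) :
  (n < m)%N -> exists2 w : 'rV_m, w != 0 & w *m B = 0.
Proof.
move=> n_lt_m; have /rowV0Pn[w /sub_kermxP wB w_neq0] : kermx B != 0.
  by rewrite kermx_eq0 /row_free neq_ltn (leq_ltn_trans (rank_leq_col B)).
by exists w.
Qed.

Section ZeroMarginMatrix.
Variables (F : fieldType) (m n : nat) (S : {set 'I_m * 'I_n}).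

Let e (k : 'I_#|S|) : 'I_m * 'I_n := enum_val k.

Let incidence_mx (T : finType) (phi : 'I_m * 'I_n -> T) (A : {set T}) :
  'M[F]_(#|S|, #|A|) := \matrix_(k, r) (phi (e k) == enum_val r)%:R.

Let incidence_mx_ker (T : finType) (phi : 'I_m * 'I_n -> T) (A : {set T})
    (w : 'rV[F]_#|S|) t :
  w *m incidence_mx phi A = 0 -> t \in A -> \sum_(k | phi (e k) == t) w 0 k = 0.
Proof.
move=> wB tA; transitivity ((w *m incidence_mx phi A) 0 (enum_rank_in tA t)).
  rewrite mxE big_mkcond; apply: eq_bigr => k _.
  by rewrite mxE (enum_rankK_in tA tA) mulr_natr mulrb.
by rewrite wB mxE.
Qed.

Let spread (w : 'rV[F]_#|S|) : 'M[F]_(m, n) :=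
  \matrix_(i, j) \sum_(k | e k == (i, j)) w 0 k.

Let spread_row_sum w i : \sum_j spread w i j = \sum_(k | (e k).1 == i) w 0 k.
Proof.
rewrite [RHS](partition_big (fun k => (e k).2) xpredT) //.
by apply: eq_bigr => j _; rewrite mxE.
Qed.

Let spread_col_sum w j : \sum_i spread w i j = \sum_(k | (e k).2 == j) w 0 k.
Proof.
rewrite [RHS](partition_big (fun k => (e k).1) xpredT) //.
by apply: eq_bigr => i _; rewrite mxE; apply: eq_bigl => k; rewrite andbC.
Qed.

Let spread_support w i j : spread w i j != 0 -> (i, j) \in S.
Proof.
apply: contraR => ijNS; rewrite mxE big_pred0 // => k.
by apply: contraNF ijNS => /eqP <-; apply: enum_valP.
Qed.

Let spread_neq0 w : w != 0 -> spread w != 0.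
Proof.
move=> /rV0Pn[k wk]; apply/matrix0Pn; exists (e k).1, (e k).2.
rewrite mxE -surjective_pairing (big_pred1 k) // => k'.
by rewrite inj_eq //; apply: enum_val_inj.
Qed.

Lemma exists_zero_margin_mx : (0 < #|S|)%N ->
  (#|fst @: S| + #|snd @: S| <= #|S|)%N ->
  exists2 D : 'M[F]_(m, n), D != 0 &
    [/\ forall i j, D i j != 0 -> (i, j) \in S,
        forall i, \sum_j D i j = 0 & forall j, \sum_i D i j = 0].
Proof.
move=> /card_gt0P[[i0 j0] ij0_S] card_S.
(* The column condition at [j0] follows from the others, as all row sums vanish;
   dropping it leaves fewer conditions than unknowns. *)
have j0_cols : j0 \in snd @: S by apply/imsetP; exists (i0, j0).
pose cols := snd @: S :\ j0.
have card_lt : (#|fst @: S| + #|cols| < #|S|)%N.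
  by move: card_S; rewrite (cardsD1 j0 (snd @: S)) j0_cols addnCA add1n.
have [w w_neq0] := exists_nonzero_left_kernel
  (row_mx (incidence_mx fst (fst @: S)) (incidence_mx snd cols)) card_lt.
rewrite mul_mx_row => /eqP; rewrite row_mx_eq0 => /andP[/eqP w_rows /eqP w_cols].
have outside (T : finType) (phi : 'I_m * 'I_n -> T) t : t \notin phi @: S ->
    \sum_(k | phi (e k) == t) w 0 k = 0.
  move=> tNS; rewrite big_pred0 // => k; apply: contraNF tNS => /eqP <-.
  by apply: imset_f; apply: enum_valP.
have row0 i : \sum_j spread w i j = 0.
  rewrite spread_row_sum; have [iS|] := boolP (i \in fst @: S); last exact: outside.
  exact: incidence_mx_ker w_rows iS.
have col0' j : j != j0 -> \sum_i spread w i j = 0.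
  move=> j_ne; rewrite spread_col_sum; have [jS|] := boolP (j \in cols).
    exact: incidence_mx_ker w_cols jS.
  by rewrite in_setD1 j_ne => /outside.
have col0 j : \sum_i spread w i j = 0.
  have [->|] := eqVneq j j0; last exact: col0'.
  have : \sum_j \sum_i spread w i j = 0.
    by rewrite exchange_big big1 // => i _; apply: row0.
  by rewrite (bigD1 j0) //= [X in _ + X]big1 ?addr0 // => k k_ne; apply: col0'.
by exists (spread w); [exact: spread_neq0 | split => //; exact: spread_support].
Qed.

End ZeroMarginMatrix.

Lemma exists_small_scale (R : realFieldType) (I : finType) (a d : I -> R) :
  (forall i, d i != 0 -> 0 < a i) ->
  exists2 t, 0 < t & forall i, d i != 0 -> t * `|d i| < a i.
Proof.
move=> a_gt0; pose m := \big[Num.min/1]_(i | d i != 0) (a i / `|d i|).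
have m_gt0 : 0 < m.
  by apply/bigmin_gtP; split=> // i di; rewrite divr_gt0 ?a_gt0 ?normr_gt0.
exists (m / 2) => [|i di]; first by rewrite divr_gt0.
rewrite -ltr_pdivlMr ?normr_gt0 //; apply: (@lt_le_trans _ _ m); first lra.
exact: bigmin_le_cond.
Qed.

Section DoublyStochastic.
Variables (R : realDomainType) (n : nat).
Implicit Types (X D : 'M[R]_n) (s : 'S_n).

Lemma ds_trmx X : doubly_stochastic X -> doubly_stochastic X^T.
Proof.
move=> [X_ge0 [X_row X_col]]; split; [|split] => [i j|i|j]; rewrite ?mxE //.
  by under eq_bigr do rewrite mxE.
by under eq_bigr do rewrite mxE.
Qed.

Lemma ds_entry_le1 X i j : doubly_stochastic X -> X i j <= 1.
Proof.
move=> [X_ge0 [X_row _]]; rewrite -(X_row i) (bigD1 j) //= lerDl.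
by apply: sumr_ge0 => k _.
Qed.

Lemma ds_row_entryD_le1 X i j k : doubly_stochastic X -> j != k ->
  X i j + X i k <= 1.
Proof.
move=> [X_ge0 [X_row _]] jk; rewrite -(X_row i) (bigD1 j) //= lerD2l.
by rewrite (bigD1 k) 1?eq_sym //= lerDl; apply: sumr_ge0 => l _.
Qed.

Lemma ds_col_entryD_le1 X i j k : doubly_stochastic X -> i != j ->
  X i k + X j k <= 1.
Proof.
by move=> /ds_trmx X_ds ij; have := ds_row_entryD_le1 k X_ds ij; rewrite !mxE.
Qed.

Lemma ds_add_zero_margin X D : doubly_stochastic X ->
  (forall i j, `|D i j| <= X i j) ->
  (forall i, \sum_j D i j = 0) -> (forall j, \sum_i D i j = 0) ->
  doubly_stochastic (X + D).
Proof.
move=> [X_ge0 [X_row X_col]] D_le D_row D_col.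
split; [|split] => [i j|i|j]; rewrite ?mxE.
- by rewrite -lerBlDr sub0r (le_trans _ (D_le i j)) // -normrN ler_norm.
- by under eq_bigr do rewrite mxE; rewrite big_split /= X_row D_row addr0.
- by under eq_bigr do rewrite mxE; rewrite big_split /= X_col D_col addr0.
Qed.

Lemma perm_mxE s i j : (perm_mx s : 'M[R]_n) i j = (s i == j)%:R.
Proof. by rewrite !mxE. Qed.

Lemma perm_mx_ds s : doubly_stochastic (perm_mx s : 'M[R]_n).
Proof.
have row1 t i : \sum_j (perm_mx t : 'M[R]_n) i j = 1.
  rewrite (bigD1 (t i)) //= perm_mxE eqxx big1 ?addr0 // => j.
  by rewrite perm_mxE eq_sym => /negbTE ->.
split; [|split] => [i j|i|j]; rewrite ?perm_mxE ?ler0n ?row1 //.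
rewrite -[RHS](row1 s^-1%g j); apply: eq_bigr => i _.
by rewrite -tr_perm_mx [RHS]mxE.
Qed.

Lemma sum_map_perm_mx (V : nmodType) (G : R -> V) s :
  \sum_i \sum_j G ((perm_mx s : 'M[R]_n) i j) = (G 1 + G 0 *+ n.-1) *+ n.
Proof.
rewrite -[in RHS](card_ord n) -sumr_const; apply: eq_bigr => i _.
rewrite (bigD1 (s i)) //= perm_mxE eqxx; congr (_ + _).
rewrite -(cardC1 (s i)) -sumr_const; apply: eq_bigr => j.
by rewrite perm_mxE eq_sym => /negbTE ->.
Qed.

Lemma ds_fractional_entry X : doubly_stochastic X -> ~~ is_perm_mx X ->
  exists i j, 0 < X i j < 1.
Proof.
move=> X_ds; apply: contraNP => no_frac; have [X_ge0 [X_row _]] := X_ds.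
have X01 i j : X i j = 0 \/ X i j = 1.
  have := X_ge0 i j; have := ds_entry_le1 i j X_ds.
  rewrite le_eqVlt => /orP[/eqP->|X_lt1]; first by right.
  rewrite le_eqVlt => /orP[/eqP<-|X_gt0]; first by left.
  by case: no_frac; exists i, j; rewrite X_gt0 X_lt1.
have /fin_all_exists[s X_s] : forall i, exists j, X i j = 1.
  move=> i; apply: contraNP (oner_neq0 R) => no1.
  rewrite -(X_row i) big1 // => j _; case: (X01 i j) => // X1.
  by case: no1; exists j.
have X_perm i j : X i j = (s i == j)%:R.
  have [<-|j_ne] := eqVneq (s i) j; first exact: X_s.
  case: (X01 i j) => // X1; exfalso.
  by have := ds_row_entryD_le1 i X_ds j_ne; rewrite X_s X1; lra.
have s_inj : injective s.
  move=> i1 i2 s12; apply/eqP/negP => /negP i12.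
  by have := ds_col_entryD_le1 (s i1) X_ds i12; rewrite X_s s12 X_s; lra.
apply/is_perm_mxP; exists (perm s_inj).
by apply/matrixP => i j; rewrite perm_mxE permE.
Qed.

Lemma ds_fractional_partner X i j : doubly_stochastic X -> 0 < X i j < 1 ->
  exists2 k, k != j & 0 < X i k < 1.
Proof.
move=> X_ds /andP[Xij_gt0 Xij_lt1]; have [X_ge0 [X_row _]] := X_ds.
have rest : \sum_(k | k != j) X i k = 1 - X i j.
  by rewrite -(X_row i) [in RHS](bigD1 j) //= addrC addrK.
have rest_neq0 : \sum_(k | k != j) X i k <> 0 by rewrite rest; lra.
have [k /andP[kj Xik_gt0]] := psumr_neq0P (fun k _ => X_ge0 i k) rest_neq0.
exists k => //; rewrite Xik_gt0 /=.
by have := ds_row_entryD_le1 i X_ds kj; lra.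
Qed.

End DoublyStochastic.

Definition fractional_support (R : numDomainType) n (X : 'M[R]_n) :
  {set 'I_n * 'I_n} := [set ij | 0 < X ij.1 ij.2 < 1].

Lemma card_fractional_support (R : realDomainType) n (X : 'M[R]_n) :
  doubly_stochastic X ->
  (#|fst @: fractional_support X| + #|snd @: fractional_support X|
     <= #|fractional_support X|)%N.
Proof.
move=> X_ds.
have rows := @leq_double_card_imset _ _ fst (fractional_support X).
have cols := @leq_double_card_imset _ _ snd (fractional_support X).
suff [/rows r2 /cols c2] : (forall ij, ij \in fractional_support X -> exists2 ij',
    ij' \in fractional_support X & (ij' != ij) && (ij'.1 == ij.1)) /\
  (forall ij, ij \in fractional_support X -> exists2 ij',
    ij' \in fractional_support X & (ij' != ij) && (ij'.2 == ij.2)).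
  rewrite -(leq_pmul2l (isT : (0 < 2)%N)) mulnDr [X in (_ <= X)%N]mul2n.
  by rewrite -addnn leq_add.
split=> -[i j]; rewrite inE /= => Xij.
  have [k kj Xik] := ds_fractional_partner X_ds Xij.
  by exists (i, k); rewrite ?inE //= xpair_eqE eqxx kj.
have /(ds_fractional_partner (ds_trmx X_ds))[k ki] : 0 < X^T j i < 1 by rewrite mxE.
by rewrite mxE => Xkj; exists (k, j); rewrite ?inE //= xpair_eqE eqxx !andbT.
Qed.

Lemma ds_not_perm_midpoint (R : realFieldType) n (X : 'M[R]_n) :
  doubly_stochastic X -> ~~ is_perm_mx X ->
  exists D, [/\ D != 0, doubly_stochastic (X + D), doubly_stochastic (X - D)
    & forall i j, D i j != 0 -> `|D i j| < X i j].
Proof.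
move=> X_ds X_nperm; have X_ge0 := X_ds.1.
have S_gt0 : (0 < #|fractional_support X|)%N.
  have [i [j Xij]] := ds_fractional_entry X_ds X_nperm.
  by apply/card_gt0P; exists (i, j); rewrite inE.
have [D0 D0_neq0 [D0_supp D0_row D0_col]] :=
  exists_zero_margin_mx R S_gt0 (card_fractional_support X_ds).
have D0_pos i j : D0 i j != 0 -> 0 < X i j.
  by move=> /D0_supp; rewrite inE => /andP[].
have [t t_gt0 t_small] := exists_small_scale (fun ij => D0_pos ij.1 ij.2).
pose D := t *: D0.
have D_lt i j : D i j != 0 -> `|D i j| < X i j.
  rewrite mxE mulf_eq0 negb_or => /andP[_ D0ij].
  by rewrite normrM gtr0_norm // (t_small (i, j)).
have D_le i j : `|D i j| <= X i j.
  by have [->|/D_lt/ltW //] := eqVneq (D i j) 0; rewrite normr0.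
have D_row i : \sum_j D i j = 0.
  by under eq_bigr do rewrite mxE; rewrite -mulr_sumr D0_row mulr0.
have D_col j : \sum_i D i j = 0.
  by under eq_bigr do rewrite mxE; rewrite -mulr_sumr D0_col mulr0.
exists D; split => //.
- by rewrite scaler_eq0 negb_or gt_eqF.
- exact: ds_add_zero_margin.
- apply: ds_add_zero_margin => // [i j|i|j]; first by rewrite mxE normrN.
    by under eq_bigr do rewrite mxE; rewrite sumrN D_row oppr0.
  by under eq_bigr do rewrite mxE; rewrite sumrN D_col oppr0.
Qed.

Section PowRStrongConcavity.
Local Open Scope classical_set_scope.
Local Open Scope ring_scope.
Variables (R : realType) (p M : R).
Hypotheses (p_gt0 : 0 < p) (p_lt1 : p < 1) (M_gt0 : 0 < M).

(* [L = K'] is nonincreasing on ]0, M] since [L' = p (p - 1) z^(p-2) + nu <= 0]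
   there, so [K] is concave on ]0, M]; the second difference of [K] is that of
   [powR ^~ p] plus [nu s^2]. *)
Let nu := p * (1 - p) * M `^ (p - 2).
Let K (z : R) := z `^ p + nu / 2 * z ^+ 2.
Let L (z : R) := p * z `^ (p - 1) + nu * z.

Let is_derive_K (z : R) : 0 < z -> is_derive z 1 K (L z).
Proof.
move=> z_gt0.
have := is_deriveD (is_derive1_powR p z_gt0)
  (is_deriveZ (nu / 2) (is_deriveX 2 (is_derive_id z 1))).
by move/is_derive_eq; apply; rewrite /L /GRing.scale /= mulr1; congr (_ + _); field.
Qed.

Let is_derive_L (z : R) :
  0 < z -> is_derive z 1 L (p * (p - 1) * z `^ (p - 2) + nu).
Proof.
move=> z_gt0.
have := is_deriveD (is_deriveZ p (is_derive1_powR (p - 1) z_gt0))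
  (is_deriveZ nu (is_derive_id z 1)).
move/is_derive_eq; apply; rewrite /GRing.scale /= mulr1 mulrA.
by rewrite (_ : p - 1 - 1 = p - 2) //; ring.
Qed.

Let MVT_pos (F dF : R -> R) (a b : R) : 0 < a -> a <= b ->
  (forall z : R, 0 < z -> is_derive z 1 F (dF z)) ->
  exists2 c, a <= c <= b & F b - F a = dF c * (b - a).
Proof.
move=> a_gt0 ab dF_F.
have pos_itv z : z \in `[a, b] -> 0 < z.
  by rewrite in_itv /= => /andP[az _]; apply: lt_le_trans az.
have F_cont : {within `[a, b], continuous F}.
  by apply: derivable_within_continuous => z /pos_itv /dF_F [].
have [c c_ab ->] := MVT_segment ab
  (fun z z_ab => dF_F z (pos_itv z (subset_itv_oo_cc z_ab))) F_cont.
by exists c; rewrite -?in_itv.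
Qed.

Let powR_le_neg_exponent (z : R) : 0 < z -> z <= M -> M `^ (p - 2) <= z `^ (p - 2).
Proof.
move=> z_gt0 zM; rewrite -(opprB 2 p) !powRN lef_pV2 ?posrE ?powR_gt0 //.
apply: ge0_ler_powR; rewrite ?nnegrE ?(ltW z_gt0) ?(ltW M_gt0) //.
by rewrite subr_ge0 (le_trans (ltW p_lt1)) ?ler1n.
Qed.

Let L_nonincreasing (y z : R) : 0 < y -> y <= z -> z <= M -> L z <= L y.
Proof.
move=> y_gt0 yz zM.
rewrite -subr_le0; have [c /andP[yc cz] ->] := MVT_pos y_gt0 yz is_derive_L.
rewrite mulr_le0_ge0 ?subr_ge0 //.
have c_gt0 := lt_le_trans y_gt0 yc.
have : nu <= p * (1 - p) * c `^ (p - 2).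
  by rewrite ler_pM2l ?powR_le_neg_exponent ?(le_trans cz) // mulr_gt0 ?subr_gt0.
lra.
Qed.

Let powR_second_difference_le_ge0 (x s : R) :
  0 <= s -> 0 < x - s -> x + s <= M ->
  (x + s) `^ p + (x - s) `^ p - 2 * x `^ p <= - nu * s ^+ 2.
Proof.
move=> s_ge0 xs_gt0 xsM.
have x_gt0 : 0 < x by lra.
have [xs_x x_xs] : x - s <= x /\ x <= x + s by split; lra.
have [c1 /andP[c1_gt0 c1x] E1] := MVT_pos xs_gt0 xs_x is_derive_K.
have [c2 /andP[xc2 c2xs] E2] := MVT_pos x_gt0 x_xs is_derive_K.
have L_c2c1 : L c2 * s <= L c1 * s.
  by apply/ler_wpM2r/L_nonincreasing => //; lra.
move: E1 E2 L_c2c1; rewrite /K.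
have [-> ->] : x - (x - s) = s /\ x + s - x = s by split; ring.
lra.
Qed.

Lemma powR_second_difference_le (x s : R) : 0 < x - `|s| -> x + `|s| <= M ->
  (x + s) `^ p + (x - s) `^ p - 2 * x `^ p
    <= - (p * (1 - p) * M `^ (p - 2)) * s ^+ 2.
Proof.
have [s_ge0|s_lt0] := leP 0 s.
  by rewrite ger0_norm //; apply: powR_second_difference_le_ge0.
rewrite ltr0_norm // => xs_gt0 xsM.
have Ns_ge0 : 0 <= - s by rewrite oppr_ge0 ltW.
have := powR_second_difference_le_ge0 Ns_ge0 xs_gt0 xsM.
by rewrite opprK sqrrN [_ `^ p + _]addrC.
Qed.

End PowRStrongConcavity.

Definition penalty (R : realType) n (p eps : R) (X : 'M[R]_n) : R :=
  \sum_i \sum_j (X i j + eps) `^ p.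

Lemma F_penE (R : realType) n (f : 'M[R]_n -> R) (sigma p eps : R) X :
  F_pen f sigma p eps X = f X + sigma * penalty p eps X.
Proof. by []. Qed.

Lemma penalty_second_difference (R : realType) n (p eps : R) (X D : 'M[R]_n) :
  0 < p -> p < 1 -> 0 <= eps ->
  doubly_stochastic (X + D) -> doubly_stochastic (X - D) ->
  (* keeps the entries of [X +- D] positive where [D] is nonzero, even for
     [eps = 0], so that [powR] is differentiable there *)
  (forall i j, D i j != 0 -> `|D i j| < X i j) ->
  penalty p eps (X + D) + penalty p eps (X - D) - 2 * penalty p eps X
    <= - (p * (1 - p) * (1 + eps) `^ (p - 2)) * frob_norm2 D.
Proof.
move=> p_gt0 p_lt1 eps_ge0 XDp_ds XDm_ds D_lt.
rewrite /penalty frob_norm2E mulr_sumr -!big_split -sumrB mulr_sumr.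
apply: ler_sum => i _; rewrite mulr_sumr -!big_split -sumrB mulr_sumr.
apply: ler_sum => j _; rewrite !mxE.
have [->|Dij] := eqVneq (D i j) 0.
  by rewrite addr0 subr0 expr0n mulr0 /=; lra.
have := ds_entry_le1 i j XDp_ds; have := ds_entry_le1 i j XDm_ds.
rewrite !mxE => XDm_le1 XDp_le1.
rewrite [X i j + _ + _]addrAC [X i j - _ + _]addrAC.
apply: powR_second_difference_le => //; first lra.
- have := D_lt i j Dij; lra.
- have : `|D i j| <= 1 - X i j by rewrite ler_norml; apply/andP; split; lra.
  lra.
Qed.

Lemma penalty_perm_mx (R : realType) n (p eps : R) (s : 'S_n) :
  penalty p eps (perm_mx s : 'M[R]_n) = ((1 + eps) `^ p + eps `^ p *+ n.-1) *+ n.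
Proof. by rewrite /penalty (sum_map_perm_mx (fun x => (x + eps) `^ p)) add0r. Qed.

Theorem theorem3p2 (R : realType) (n : nat) (f : 'M[R]_n -> R)
  (gradf : 'M[R]_n -> 'M[R]_n) (nu_lo nu_hi p eps sigma : R)
  (Xs : 'M[R]_n) :
  (forall X, differentiable f X) ->
  (forall X V, 'd f X V = frob_inner (gradf X) V) ->
  nu_lo <= nu_hi ->
  (forall X Y, doubly_stochastic X -> doubly_stochastic Y ->
     nu_lo / 2 * frob_norm2 (Y - X)
       <= f Y - f X - frob_inner (gradf X) (Y - X)
     /\ f Y - f X - frob_inner (gradf X) (Y - X)
       <= nu_hi / 2 * frob_norm2 (Y - X)) ->
  0 < p -> p < 1 -> 0 <= eps ->
  Num.max (nu_hi / (p * (1 - p) * powR (1 + eps) (p - 2))) 0 < sigma ->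
  doubly_stochastic Xs ->
  (forall X, doubly_stochastic X -> F_pen f sigma p eps Xs <= F_pen f sigma p eps X) ->
  perm_matrix Xs /\ (forall P, perm_matrix P -> f Xs <= f P).
Proof.
move=> _ _ _ f_curv p_gt0 p_lt1 eps_ge0 sigma_gt Xs_ds Xs_min.
set nu := p * (1 - p) * powR (1 + eps) (p - 2) in sigma_gt.
have nu_gt0 : 0 < nu by rewrite !mulr_gt0 ?subr_gt0 ?powR_gt0 //; lra.
move: sigma_gt; rewrite gt_max ltr_pdivrMr // => /andP[nu_hi_lt sigma_gt0].
have Xs_perm : is_perm_mx Xs.
  apply: contraT => /(ds_not_perm_midpoint Xs_ds)[D [D_neq0 XDp_ds XDm_ds D_lt]].
  have [_ f_plus] := f_curv _ _ Xs_ds XDp_ds.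
  have [_ f_minus] := f_curv _ _ Xs_ds XDm_ds.
  have h_diff := penalty_second_difference p_gt0 p_lt1 eps_ge0 XDp_ds XDm_ds D_lt.
  rewrite -/nu in h_diff.
  have F_plus := Xs_min _ XDp_ds; have F_minus := Xs_min _ XDm_ds.
  move: f_plus f_minus F_plus F_minus.
  have [-> ->] : Xs + D - Xs = D /\ Xs - D - Xs = - D by split; rewrite addrC addKr.
  rewrite !F_penE frob_innerN frob_norm2N.
  have N_gt0 := frob_norm2_gt0 D_neq0.
  have := ler_wpM2l (ltW sigma_gt0) h_diff.
  have : 0 < (sigma * nu - nu_hi) * frob_norm2 D by rewrite mulr_gt0 ?subr_gt0.
  lra.
split=> // _ /is_perm_mxP[s ->]; have [t Xs_t] := is_perm_mxP _ Xs_perm.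
by have := Xs_min _ (perm_mx_ds R s); rewrite Xs_t !F_penE !penalty_perm_mx; lra.
Qed.
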